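(* Let $G$ be a claw-free graph. Then either $G$ is a quasi-line graph, or there is a vertex $v$ of $G$ with $$\deg_{G^2}(v)\le \omega(G)^2+\frac{\omega(G)+1}{2}$$ such that $N_G(v)$ is a clique in $(G\setminus v)^2$ (i.e. any two distinct vertices of $N_G(v)$ are at distance at most $2$ in $G\setminus v$).
   Context: Graphs are finite and simple. A graph is claw-free if it has no induced $K_{1,3}$. A graph is a quasi-line graph if for every vertex $v$, the subgraph induced by $N_G(v)$ can be covered by two cliques (its vertex set is a union of two cliques). $G^2$ is the graph on $V(G)$ where distinct vertices are adjacent iff at distance at most $2$ in $G$; $\deg_{G^2}(v)$ is the degree of $v$ in $G^2$. $G\setminus v$ is the graph obtained by deleting $v$. $\omega$ is the clique number. *)

From mathcomp Require Import all_boot.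
Set Implicit Arguments. Unset Strict Implicit. Unset Printing Implicit Defensive.

Section Graph.
Variables (T : finType) (e : rel T).

Definition simple_graph : Prop := symmetric e /\ irreflexive e.

Definition nbhd (v : T) : {set T} := [set u | e v u].

Definition is_clique (A : {set T}) : Prop :=
  forall x y, x \in A -> y \in A -> x != y -> e x y.

Definition claw_free : Prop :=
  ~ exists v a b c,
      [/\ e v a, e v b, e v c, [&& a != b, a != c & b != c] &
          [&& ~~ e a b, ~~ e a c & ~~ e b c]].

Definition quasi_line : Prop :=
  forall v, exists A B : {set T},
    [/\ is_clique A, is_clique B & nbhd v = A :|: B].

Definition clique_number : nat :=
  \max_(A : {set T} | [forall x in A, forall y in A, (x != y) ==> e x y]) #|A|.

(* distance at most 2 in G \ w (w is deleted), for distinct x y different from w;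
   distance at most 2 in G is the same with no deleted vertex *)
Definition adj2 (x y : T) : bool := e x y || [exists w, e x w && e w y].
Definition adj2_del (v x y : T) : bool :=
  e x y || [exists w, [&& w != v, e x w & e w y]].

Definition deg_sq (v : T) : nat := #|[set u | (u != v) && adj2 v u]|.

Definition nbhd_clique_sq_del (v : T) : Prop :=
  forall x y, x \in nbhd v -> y \in nbhd v -> x != y -> adj2_del v x y.

End Graph.

(* Fix a vertex v whose neighbourhood N(v) is not the union of two cliques.
   If non-adjacent x, y in N(v) had no common neighbour besides v, then N(v)
   would be covered by the non-neighbours of x and the non-neighbours of y,
   both cliques by claw-freeness; so N(v) is a clique in (G \ v)^2.
   The complement of G on N(v) is triangle-free (claw-freeness) and not
   bipartite, so it contains an induced odd cycle C of length n >= 5.  Each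
   vertex at distance 2 from v is adjacent to at least (n - 1)/2 vertices of C,
   while each vertex of C has fewer than omega such neighbours (together with
   it they form a clique), whence at most 5(omega - 1)/2 vertices at distance 2.
   As N(v) has no stable triple and no clique of size omega, the Ramsey bound
   gives |N(v)| <= (omega - 1)(omega + 2)/2, and the two bounds add up. *)

From mathcomp Require Import all_boot zify.
From Stdlib Require Import Classical.
Set Implicit Arguments. Unset Strict Implicit. Unset Printing Implicit Defensive.

Section Walks.
Variables (T : Type) (H : rel T).
Hypothesis Hsym : symmetric H.

Definition walk (n : nat) (x y : T) : Prop := exists f : nat -> T,
  [/\ f 0 = x, f n = y & forall i, i < n -> H (f i) (f i.+1)].

Lemma walk0 x : walk 0 x x.
Proof. by exists (fun=> x). Qed.

Lemma walk1 x y : H x y -> walk 1 x y.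
Proof. by move=> hxy; exists (fun i => if i == 0 then x else y); split=> // -[]. Qed.

Lemma walk_cat m n x y z : walk m x y -> walk n y z -> walk (m + n) x z.
Proof.
case=> f [f0 fm fe] [g [g0 gn ge]].
exists (fun i => if i <= m then f i else g (i - m)); split.
- by rewrite leq0n.
- case: n gn ge => [|n] gn ge; first by rewrite addn0 leqnn fm -g0 gn.
  by rewrite ifF ?addKn //; lia.
move=> i lt_i /=; case: (ltngtP i m) => him.
- exact: fe.
- have -> : i.+1 - m = (i - m).+1 by lia.
  by apply: ge; lia.
- by rewrite him subSnn fm -g0; apply: ge; lia.
Qed.

Lemma walk_rev n x y : walk n x y -> walk n y x.
Proof.
case=> f [f0 fn fe]; exists (fun i => f (n - i)); split.
- by rewrite subn0.
- by rewrite subnn.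
move=> i lt_i; rewrite Hsym.
have -> : n - i = (n - i.+1).+1 by lia.
apply: fe; lia.
Qed.

Lemma walk_sub n f : (forall i, i < n -> H (f i) (f i.+1)) ->
  forall a b, a <= b <= n -> walk (b - a) (f a) (f b).
Proof.
move=> fe a b /andP[ab bn]; exists (fun i => f (a + i)); split.
- by rewrite addn0.
- by rewrite subnKC.
by move=> i lt_i; rewrite addnS; apply: fe; lia.
Qed.

Lemma odd_closed_walk_of_edge z x y n1 n2 : H x y -> walk n1 z x -> walk n2 z y ->
  odd n1 = odd n2 -> walk (n1 + 1 + n2) z z /\ odd (n1 + 1 + n2).
Proof.
move=> hxy w1 w2 par; split; first exact: walk_cat (walk_cat w1 (walk1 hxy)) (walk_rev w2).
by rewrite !oddD par addbC addbA addbb.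
Qed.

End Walks.

Section OddCycles.
Variables (T : finType) (H : rel T).
Hypothesis Hsym : symmetric H.

(* The bipartite double cover of H: a path from (x, b) to (y, c) is a walk
   from x to y whose length has parity b != c. *)
Definition parity_cover : rel (T * bool) := fun p q => H p.1 q.1 && (q.2 == ~~ p.2).

Lemma walk_of_parity_cover x b y c : connect parity_cover (x, b) (y, c) ->
  exists2 n, odd n = (b != c) & walk H n x y.
Proof.
move=> /connectP[p]; elim: p x b => [|[z d] p IH] x b /=.
  by move=> _ [-> ->]; exists 0; [rewrite eqxx | exact: walk0].
case/andP=> /andP[/= hxz /eqP dE]; subst d => /IH/[apply] -[n par wn].
exists n.+1; first by rewrite /= par; case: (b); case: (c).
exact: walk_cat (walk1 hxz) wn.
Qed.

Lemma parity_cover_lift x y b : connect H x y ->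
  exists c, connect parity_cover (x, b) (y, c).
Proof.
move=> /connectP[p]; elim: p x b => [|z p IH] x b /=; first by move=> _ ->; exists b.
case/andP=> hxz /IH hp /(hp (~~ b))[c hc] {hp}; exists c.
by apply: connect_trans hc; apply: connect1; rewrite /parity_cover /= hxz eqxx.
Qed.

Lemma bipartition_of_no_odd_closed_walk (A : {set T}) :
  (forall n x, odd n -> ~ walk H n x x) ->
  exists X Y : {set T}, [/\ A = X :|: Y,
    {in X &, forall x y, ~~ H x y} & {in Y &, forall x y, ~~ H x y}].
Proof.
(* A vertex goes to the side given by the parity of walks from the root of
   its component. *)
move=> no_odd; pose side x := connect parity_cover (root H x, false) (x, false).
have root_edge x y : H x y -> root H y = root H x.
  by move=> hxy; apply/esym/(rootP (sym_connect_sym Hsym))/connect1.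
have no_edge x y n1 n2 : H x y -> walk H n1 (root H x) x -> walk H n2 (root H x) y ->
    odd n1 = odd n2 -> False.
  move=> hxy w1 w2 par; have [w o] := odd_closed_walk_of_edge Hsym hxy w1 w2 par.
  exact: no_odd o w.
exists [set x in A | side x], [set x in A | ~~ side x]; split.
- by apply/setP => x; rewrite !inE -andb_orr orbN andbT.
- move=> x y; rewrite !inE => /andP[_ sx] /andP[_ sy]; apply/negP => hxy.
  rewrite /side (root_edge _ _ hxy) in sy.
  have [n1 o1 w1] := walk_of_parity_cover sx; have [n2 o2 w2] := walk_of_parity_cover sy.
  by apply: (no_edge _ _ _ _ hxy w1 w2); rewrite o1 o2.
- move=> x y; rewrite !inE => /andP[_ sx] /andP[_ sy]; apply/negP => hxy.
  have reach z : ~~ side z -> exists2 n, odd n & walk H n (root H z) z.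
    move=> sz; have rz : connect H (root H z) z by rewrite sym_connect_sym // connect_root.
    have [[] hc] := parity_cover_lift false rz; last by rewrite /side hc in sz.
    by have [n o w] := walk_of_parity_cover hc; exists n; rewrite ?o.
  have [n1 o1 w1] := reach x sx; have [n2 o2 w2] := reach y sy.
  rewrite (root_edge _ _ hxy) in w2.
  by apply: (no_edge _ _ _ _ hxy w1 w2); rewrite o1 o2.
Qed.

Lemma shortest_odd_closed_walk n x : odd n -> walk H n x x ->
  exists m (f : nat -> T), [/\ odd m, f m = f 0, forall i, i < m -> H (f i) (f i.+1)
    & forall k y, k < m -> odd k -> ~ walk H k y y].
Proof.
elim/ltn_ind: n x => n IH x on wn.
case: (classic (exists k y, [/\ k < n, odd k & walk H k y y])) => [[k [y [lt_k ok wk]]]|].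
  exact: IH lt_k y ok wk.
move=> no_shorter; case: wn => f [f0 fn fe]; exists n, f; split; rewrite ?fn ?f0 //.
by move=> k y lt_k ok wk; apply: no_shorter; exists k, y.
Qed.

Lemma shortest_odd_closed_walk_chordless n (f : nat -> T) : odd n -> f n = f 0 ->
  (forall i, i < n -> H (f i) (f i.+1)) ->
  (forall k y, k < n -> odd k -> ~ walk H k y y) ->
  forall i j, i < j < n -> H (f i) (f j) -> j = i.+1 \/ (i = 0 /\ j = n.-1).
Proof.
(* A chord splits the closed walk into two shorter ones, one of them odd. *)
move=> on fn fe shortest i j /andP[ij jn] hij.
case: (ltngtP j i.+1) => [|gt_j|]; [lia| |by left].
have [/andP[/eqP-> /eqP->]|not_ends] := boolP ((i == 0) && (j == n.-1)); first by right.
have inner : walk H (j - i + 1) (f i) (f i).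
  by apply: walk_cat; [apply: (walk_sub fe); lia | apply: walk1; rewrite Hsym].
have outer : walk H (i + 1 + (n - j)) (f 0) (f 0).
  have w1 : walk H (i - 0) (f 0) (f i) by apply: (walk_sub fe); lia.
  have w2 : walk H (n - j) (f j) (f n) by apply: (walk_sub fe); lia.
  rewrite subn0 in w1; rewrite fn in w2.
  exact: walk_cat (walk_cat w1 (walk1 hij)) w2.
have : odd (j - i + 1) || odd (i + 1 + (n - j)).
  have sum_len : (j - i + 1) + (i + 1 + (n - j)) = n.+2 by lia.
  by move: (congr1 odd sum_len); rewrite oddD /= on; case: odd; case: odd.
case/orP => o; exfalso; [apply: (shortest _ _ _ o inner) | apply: (shortest _ _ _ o outer)].
- by move: not_ends; rewrite negb_and; case/orP => /eqP; lia.
- lia.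
Qed.

Lemma odd_cycle_of_odd_closed_walk n x : irreflexive H -> odd n -> walk H n x x ->
  exists m (c : 'I_m -> T), [/\ odd m, 1 < m, forall i, H (c i) (c (ordS i))
    & forall i j, H (c i) (c j) -> j = ordS i \/ i = ordS j].
Proof.
move=> Hirr on wn; have [m [f [om fm fe shortest]]] := shortest_odd_closed_walk on wn.
have chordless := shortest_odd_closed_walk_chordless om fm fe shortest.
have m_gt1 : 1 < m.
  by case: m om fm fe {shortest chordless} => [|[|m]] // _ f1 /(_ 0 isT); rewrite f1 Hirr.
have edge (i : 'I_m) : H (f i) (f (ordS i)).
  rewrite /=; case: (ltngtP i.+1 m) => lt_i; first by rewrite modn_small // fe.
  - by have := ltn_ord i; lia.
  - by rewrite lt_i modnn -fm -(congr1 f lt_i) fe.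
have chord (i j : 'I_m) : i < j -> H (f i) (f j) -> j = ordS i \/ i = ordS j.
  move=> lt_ij /(chordless i j)[]; first by rewrite lt_ij ltn_ord.
  - by move=> ji; left; apply: val_inj; rewrite /= -ji modn_small.
  - by case=> i0 jm; right; apply: val_inj; rewrite /= jm prednK ?modnn //; lia.
exists m, (fun i => f i); split=> // i j hij; case: (ltngtP i j) => lt_ij.
- exact: chord.
- by rewrite Hsym in hij; case: (chord _ _ lt_ij hij) => ?; [right | left].
- by move: hij; rewrite lt_ij Hirr.
Qed.
End OddCycles.

Lemma alternating_ordS_even n (b : 'I_n -> bool) :
  (forall i, b (ordS i) = ~~ b i) -> ~~ odd n.
Proof.
move=> alt; set P := [set i | b i].
have le_img (Q R : {set 'I_n}) : (@ordS n) @: Q \subset R -> #|Q| <= #|R|.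
  by move=> /subset_leq_card; rewrite card_imset //; apply: ordS_inj.
have le1 : #|P| <= #|~: P|.
  by apply: le_img; apply/subsetP => j /imsetP[i]; rewrite !inE => bi ->; rewrite alt bi.
have le2 : #|~: P| <= #|P|.
  by apply: le_img; apply/subsetP => j /imsetP[i]; rewrite !inE => bi ->; rewrite alt.
have : #|P| + #|~: P| = n by rewrite cardsC card_ord.
have -> : #|~: P| = #|P| by apply/eqP; rewrite eqn_leq le1 le2.
by move=> <-; rewrite addnn odd_double.
Qed.

Lemma ordS_neq n (i : 'I_n) : 1 < n -> ordS i != i.
Proof.
move=> n_gt1; rewrite -val_eqE /=; case: (ltngtP i.+1 n) => lt_i.
- by rewrite modn_small // gtn_eqF.
- by have := ltn_ord i; lia.
- by rewrite lt_i modnn; apply/eqP; lia.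
Qed.

Lemma card_sparse_ord n (S K : {set 'I_n}) : {in S, forall i, ordS i \notin S} ->
  S :|: [set ordS i | i in S] \subset ~: K -> (#|S|).*2 <= n - #|K|.
Proof.
move=> sparse sub; have disj : S :&: [set ordS i | i in S] = set0.
  apply/setP => x; rewrite !inE; apply/negP => /andP[xS /imsetP[i iS xE]].
  by move: (sparse i iS); rewrite -xE xS.
have := subset_leq_card sub; rewrite cardsU disj cards0 subn0.
rewrite card_imset; last exact: ordS_inj.
by rewrite -addnn [#|~: K|]cardsCs setCK card_ord.
Qed.

Lemma double_count (I J : finType) (A : {set I}) (r : I -> J -> bool) :
  \sum_(x in A) #|[set y | r x y]| = \sum_y #|[set x in A | r x y]|.
Proof.
under eq_bigr => x _ do rewrite -sum1dep_card.
rewrite (exchange_big_dep predT) //=; apply: eq_bigr => y _.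
by rewrite -sum1dep_card.
Qed.

Section Cliques.
Variables (T : finType) (e : rel T).
Hypothesis esym : symmetric e.
Hypothesis eirr : irreflexive e.
Hypothesis cf : claw_free e.

Lemma is_clique1 x : is_clique e [set x].
Proof. by move=> y z; rewrite !inE => /eqP-> /eqP->; rewrite eqxx. Qed.

Lemma is_cliqueU1 x (B : {set T}) :
  {in B, forall y, e x y} -> is_clique e B -> is_clique e (x |: B).
Proof.
move=> xB cB y z; rewrite !inE => /orP[/eqP->|yB] /orP[/eqP->|zB]; rewrite ?eqxx //.
- by move=> _; apply: xB.
- by move=> _; rewrite esym; apply: xB.
- exact: cB.
Qed.

Lemma card_clique_le (A : {set T}) : is_clique e A -> #|A| <= clique_number e.
Proof.
move=> cA; apply: (@leq_bigmax_cond _ _ (fun A : {set T} => #|A|) A).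
apply/forallP => x; apply/implyP => xA; apply/forallP => y; apply/implyP => yA.
by apply/implyP => xy; apply: cA.
Qed.

Lemma clique_number_gt0 (x : T) : 0 < clique_number e.
Proof. by have := card_clique_le (@is_clique1 x); rewrite cards1. Qed.

(* Erdos-Szekeres: R(3, s + 1) <= 'C(s + 2, 2). *)
Lemma card_no_stable_triple s (A : {set T}) :
  (forall a b c, a \in A -> b \in A -> c \in A -> a != b -> a != c -> b != c ->
     [|| e a b, e a c | e b c]) ->
  (forall B : {set T}, B \subset A -> is_clique e B -> #|B| <= s) ->
  (#|A|).*2 <= s * (s + 3).
Proof.
elim: s A => [|s IH] A triple cliqueA.
  case: (set_0Vmem A) => [-> |[x xA]]; first by rewrite cards0.
  by have := cliqueA _ _ (@is_clique1 x); rewrite cards1 sub1set xA => /(_ isT).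
case: (set_0Vmem A) => [-> |[x xA]]; first by rewrite cards0.
pose A1 := [set y in A | e x y].
pose A2 := [set y in A | (y != x) && ~~ e x y].
have sub : A \subset x |: (A1 :|: A2).
  apply/subsetP => y yA; rewrite !inE yA /=.
  by case: (eqVneq y x) => //= _; case: (e x y).
have clique2 : is_clique e A2.
  move=> y z; rewrite !inE => /andP[yA /andP[yx xy]] /andP[zA /andP[zx xz]] yz.
  have := triple x y z xA yA zA; rewrite eq_sym yx eq_sym zx yz => /(_ isT isT isT).
  by rewrite (negbTE xy) (negbTE xz).
have card2 : #|A2| <= s.+1.
  by apply: cliqueA clique2; apply/subsetP => y; rewrite inE => /andP[].
have card1 : (#|A1|).*2 <= s * (s + 3).
  apply: IH => [a b c|B sB cB].
    by rewrite !inE => /andP[aA _] /andP[bA _] /andP[cA _]; apply: triple.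
  have xB : x \notin B by apply/negP => /(subsetP sB); rewrite inE eirr andbF.
  have xB_adj : {in B, forall y, e x y}.
    by move=> y /(subsetP sB); rewrite inE => /andP[].
  have := cliqueA (x |: B) _ (is_cliqueU1 xB_adj cB); rewrite cardsU1 xB add1n ltnS.
  apply.
  rewrite subUset sub1set xA /=; apply: subset_trans sB _.
  by apply/subsetP => y; rewrite inE => /andP[].
have := subset_leq_card sub; rewrite cardsU1.
have := (leq_card_setU A1 A2).1.
by move: card1 card2; case: (x \notin _) => /=; lia.
Qed.

Lemma claw_free_edge v a b c : e v a -> e v b -> e v c -> a != b -> a != c -> b != c ->
  [|| e a b, e a c | e b c].
Proof.
move=> va vb vc ab ac bc; apply/negPn/negP => h; apply: cf.
exists v, a, b, c; split=> //; first by rewrite ab ac bc.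
by move: h; rewrite !negb_or => /andP[-> /andP[-> ->]].
Qed.
End Cliques.

Section NonQuasiLineVertex.
Variables (T : finType) (e : rel T).
Hypothesis esym : symmetric e.
Hypothesis eirr : irreflexive e.
Hypothesis cf : claw_free e.
Variable v : T.
Hypothesis not_two_cliques : ~ exists A B : {set T},
  [/\ is_clique e A, is_clique e B & nbhd e v = A :|: B].

Local Notation N := (nbhd e v).

Definition coadj x y := [&& x \in N, y \in N, x != y & ~~ e x y].

Definition nbhd2 := [set u | [&& u != v, ~~ e v u & [exists w, e v w && e w u]]].

Lemma coadj_sym : symmetric coadj.
Proof. by move=> x y; rewrite /coadj esym eq_sym; case: (x \in N); case: (y \in N). Qed.

Lemma coadj_irr : irreflexive coadj.
Proof. by move=> x; rewrite /coadj eqxx !andbF. Qed.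

Lemma adj_of_not_coadj x y : x \in N -> y \in N -> x != y -> ~~ coadj x y -> e x y.
Proof. by move=> xN yN xy; rewrite /coadj xN yN xy /= negbK. Qed.

Lemma coadj_triangle_free a b c : coadj a b -> coadj b c -> coadj a c -> False.
Proof.
rewrite /coadj !inE => /and4P[va vb ab nab] /and4P[_ vc bc nbc] /and4P[_ _ ac nac].
by have := claw_free_edge cf va vb vc ab ac bc; rewrite (negbTE nab) (negbTE nac) (negbTE nbc).
Qed.

Lemma nbhd_nonadj_clique x : x \in N -> is_clique e [set z in N | (z != x) && ~~ e x z].
Proof.
move=> xN a b; rewrite !inE => /andP[aN /andP[ax xa]] /andP[bN /andP[bx xb]] ab.
apply/negPn/negP => nab; move: xN; rewrite inE => vx.
have := claw_free_edge cf vx aN bN; rewrite eq_sym ax eq_sym bx ab => /(_ isT isT isT).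
by rewrite (negbTE xa) (negbTE xb) (negbTE nab).
Qed.

Lemma nbhd_clique_sq_del_v : nbhd_clique_sq_del e v.
Proof.
move=> x y xN yN xy; rewrite /adj2_del; case exy: (e x y) => //=.
apply/existsP; apply: NNPP => no_common; apply: not_two_cliques.
exists [set z in N | (z != x) && ~~ e x z], [set z in N | (z != y) && ~~ e y z].
split; [exact: nbhd_nonadj_clique | exact: nbhd_nonadj_clique |].
apply/setP => z; rewrite !inE; case vz: (e v z) => //=.
case: (eqVneq z x) => [->|zx] /=; first by rewrite esym exy andbT.
case: (eqVneq z y) => [->|zy] /=; first by rewrite exy.
case exz: (e x z) => //=; case eyz: (e y z) => //=.
exfalso; apply: no_common; exists z; rewrite exz esym eyz !andbT.
by apply/eqP => zv; move: vz; rewrite zv eirr.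
Qed.

Lemma coadj_odd_cycle : exists n (c : 'I_n -> T), [/\ odd n, 4 < n,
  forall i, coadj (c i) (c (ordS i))
  & forall i j, coadj (c i) (c j) -> j = ordS i \/ i = ordS j].
Proof.
have [n [x [on wn]]] : exists n x, odd n /\ walk coadj n x x.
  apply: NNPP => no_odd.
  have [A [B [NAB stA stB]]] : exists A B : {set T}, [/\ N = A :|: B,
      {in A &, forall x y, ~~ coadj x y} & {in B &, forall x y, ~~ coadj x y}].
    apply: bipartition_of_no_odd_closed_walk coadj_sym _ _ => n x on wn.
    by apply: no_odd; exists n, x.
  apply: not_two_cliques; exists A, B; split=> // x y xA yA xy.
    by apply: adj_of_not_coadj; rewrite ?NAB ?inE ?xA ?yA ?stA.
  by apply: adj_of_not_coadj; rewrite ?NAB ?inE ?xA ?yA ?orbT ?stB.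
have [m [c [om m_gt1 edge chordless]]] :=
  odd_cycle_of_odd_closed_walk coadj_sym coadj_irr on wn.
exists m, c; split=> //.
case: m om m_gt1 c edge {chordless} => [|[|[|[|[|m]]]]] //= _ _ c edge.
exfalso; apply: (@coadj_triangle_free (c ord0) (c (ordS ord0)) (c (ordS (ordS ord0)))).
- exact: edge.
- exact: edge.
- by rewrite coadj_sym; have := edge (ordS (ordS ord0)); congr (coadj _ (c _)); apply: val_inj.
Qed.

Lemma nbhd2_notin_nbhd w : w \in nbhd2 -> w \notin N.
Proof. by rewrite !inE => /and3P[]. Qed.

Lemma card_nbhd2_adj_lt x : x \in N -> #|[set w in nbhd2 | e x w]| < clique_number e.
Proof.
move=> xN; set Q := [set w in nbhd2 | e x w].
have xQ : x \notin Q by rewrite inE; apply: contraTN xN => /andP[/nbhd2_notin_nbhd].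
have := cardsU1 x Q; rewrite xQ add1n => <-; apply: card_clique_le.
apply: is_cliqueU1 => // [w|y z]; first by rewrite inE => /andP[].
rewrite !inE => /andP[/and3P[yv nvy _] xy] /andP[/and3P[zv nvz _] xz] yz.
have xv : e x v by rewrite esym -inE.
have := claw_free_edge cf xv xy xz; rewrite eq_sym yv eq_sym zv yz.
by rewrite (negbTE nvy) (negbTE nvz) => /(_ isT isT isT).
Qed.

Section Cycle.
Variables (n : nat) (c : 'I_n -> T).
Hypotheses (odd_n : odd n) (n_gt4 : 4 < n).
Hypothesis cycle_edge : forall i, coadj (c i) (c (ordS i)).
Hypothesis cycle_chordless : forall i j, coadj (c i) (c j) -> j = ordS i \/ i = ordS j.

Lemma cycle_in_nbhd i : c i \in N.
Proof. by have /and4P[] := cycle_edge i. Qed.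

Lemma cycle_neq_nbhd2 i w : w \in nbhd2 -> c i != w.
Proof. by move=> /nbhd2_notin_nbhd; apply: contraNneq => <-; apply: cycle_in_nbhd. Qed.

(* If w saw no vertex of the cycle, non-adjacency to its neighbour u in N(v)
   would alternate along the odd cycle. *)
Lemma cycle_meets_nbhd2 w : w \in nbhd2 -> exists j, e (c j) w.
Proof.
move=> w2; move: (w2); rewrite inE => /and3P[_ _ /existsP[u /andP[vu uw]]].
apply: NNPP => none; have nw i : ~~ e (c i) w by apply/negP => ?; apply: none; exists i.
have uc i : u != c i by apply: contraTneq uw => ->; apply: nw.
apply: (negP (@alternating_ordS_even _ (fun i => coadj u (c i)) _)) odd_n => i.
have /and4P[ciN ciSN ciS nciS] := cycle_edge i.
case h1: (coadj u (c i)); case h2: (coadj u (c (ordS i))) => //=.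
  by case: (coadj_triangle_free h1 (cycle_edge i) h2).
have uN : u \in N by rewrite inE.
have eui := adj_of_not_coadj uN ciN (uc i) (negbT h1).
have euiS := adj_of_not_coadj uN ciSN (uc _) (negbT h2).
have := claw_free_edge cf uw eui euiS.
rewrite !(eq_sym w) !(cycle_neq_nbhd2 _ w2) ciS esym (negbTE (nw _)) esym (negbTE (nw _)).
by rewrite (negbTE nciS) => /(_ isT isT isT).
Qed.

Lemma cycle_adj i j : c i != c j -> i != ordS j -> j != ordS i -> e (c i) (c j).
Proof.
move=> cij ij ji; apply: adj_of_not_coadj; rewrite ?cycle_in_nbhd //.
by apply/negP => /cycle_chordless[] eq_ij; [move: ji | move: ij]; rewrite eq_ij eqxx.
Qed.

(* Fix c j adjacent to w.  By chordlessness c j is adjacent to every cycle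
   vertex outside N(w) except its two cycle neighbours, and claw-freeness at
   c j forbids two consecutive such vertices. *)
Lemma cycle_nbhd2_degree w : w \in nbhd2 -> n <= (#|[set i | e (c i) w]|).*2.+1.
Proof.
move=> w2; have [j ejw] := cycle_meets_nbhd2 w2.
set D := [set i | e (c i) w]; set S := ~: D :\: [set ord_pred j; ordS j].
have cj_adj i : i \in S -> e (c j) (c i).
  rewrite !inE negb_or => /andP[/andP[ijp ijS] niw]; apply: cycle_adj => //.
  - by apply: contraNneq niw => <-.
  - by apply: contraNneq ijp => ->; rewrite ordSK.
have sparse : {in S, forall i, ordS i \notin S}.
  move=> i iS; apply/negP => iSS; have := claw_free_edge cf ejw (cj_adj i iS) (cj_adj _ iSS).
  move: iS iSS; rewrite !inE => /andP[_ niw] /andP[_ niSw].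
  have /and4P[_ _ ciS nciS] := cycle_edge i.
  rewrite !(eq_sym w) !(cycle_neq_nbhd2 _ w2) ciS esym (negbTE niw) esym (negbTE niSw).
  by rewrite (negbTE nciS) => /(_ isT isT isT).
have cardS : (#|S|).*2 <= n - 2.
  have jS : j != ordS j by rewrite eq_sym ordS_neq //; lia.
  have <- : #|[set j; ordS j]| = 2 by rewrite cards2 jS.
  apply: card_sparse_ord sparse _.
  apply/subsetP => x; rewrite !inE => /orP[|/imsetP[i]].
    rewrite !negb_or => /andP[/andP[_ xSj] xD]; rewrite xSj andbT.
    by apply: contraNneq xD => ->.
  rewrite !inE negb_or => /andP[/andP[ijp _] niw] ->.
  rewrite negb_or; apply/andP; split.
    by apply: contraNneq ijp => <-; rewrite ordSK.
  by apply: contraNneq niw => /ordS_inj ->.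
have cardD : #|~: D| <= #|S| + 2.
  apply: leq_trans (subset_leq_card (_ : ~: D \subset S :|: [set ord_pred j; ordS j])) _.
    by apply/subsetP => x; rewrite !inE => ->; rewrite andbT orNb.
  by apply: leq_trans (leq_card_setU _ _).1 _; rewrite leq_add2l cards2; case: (_ != _).
have := cardsC D; rewrite card_ord.
have := odd_double_half n; rewrite odd_n; lia.
Qed.

Lemma card_nbhd2_le : n./2 * #|nbhd2| <= n * (clique_number e).-1.
Proof.
have half_deg w : w \in nbhd2 -> n./2 <= #|[set i | e (c i) w]|.
  by move=> /cycle_nbhd2_degree; have := odd_double_half n; rewrite odd_n; lia.
rewrite mulnC -sum_nat_const; apply: leq_trans (leq_sum _ half_deg) _.
rewrite double_count -[n in n * _]card_ord -sum_nat_const; apply: leq_sum => i _.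
by have := card_nbhd2_adj_lt (cycle_in_nbhd i); lia.
Qed.

End Cycle.

Lemma card_nbhd_le : (#|N|).*2 <= (clique_number e).-1 * ((clique_number e).-1 + 3).
Proof.
apply: card_no_stable_triple => // [a b c|B sB cB].
  by rewrite !inE; exact: claw_free_edge.
have vB : v \notin B by apply/negP => /(subsetP sB); rewrite inE eirr.
have clique_vB : is_clique e (v |: B).
  by apply: is_cliqueU1 => // y /(subsetP sB); rewrite inE.
have := card_clique_le clique_vB; rewrite cardsU1 vB add1n.
by have := clique_number_gt0 e v; lia.
Qed.

Lemma deg_sq_le : deg_sq e v <= #|N| + #|nbhd2|.
Proof.
apply: leq_trans (leq_card_setU _ _).1.
apply: subset_leq_card; apply/subsetP => u; rewrite !inE /adj2 => /andP[uv /orP[vu|ex]].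
- by rewrite vu.
- by case vu: (e v u) => //=; rewrite uv ex.
Qed.

Lemma deg_sq_le_clique_number :
  (deg_sq e v).*2 <= (clique_number e ^ 2).*2 + clique_number e + 1.
Proof.
have [n [c [odd_n n_gt4 edge chordless]]] := coadj_odd_cycle.
have M_le := card_nbhd2_le odd_n n_gt4 edge chordless.
have N_le := card_nbhd_le; have deg_le := deg_sq_le.
have n_eq := odd_double_half n; rewrite odd_n in n_eq.
have omega_gt0 := clique_number_gt0 e v; move: M_le N_le.
set h := n./2; set s := (clique_number e).-1 => M_le N_le.
have {omega_gt0}-> : clique_number e = s.+1 by rewrite prednK.
have h_ge2 : 2 <= h by lia.
have {}M_le : 2 * #|nbhd2| <= 5 * s by rewrite -n_eq add1n in M_le; nia.
nia.
Qed.
End NonQuasiLineVertex.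

Theorem mainTheorem2 (T : finType) (e : rel T) :
  simple_graph e -> claw_free e ->
  quasi_line e \/
  exists v : T,
    (deg_sq e v).*2 <= (clique_number e ^ 2).*2 + clique_number e + 1
    /\ nbhd_clique_sq_del e v.
Proof.
move=> [esym eirr] cf; case: (classic (quasi_line e)) => [ql|not_ql]; [by left | right].
have [v not_two_cliques] : exists v, ~ exists A B : {set T},
    [/\ is_clique e A, is_clique e B & nbhd e v = A :|: B].
  by apply: NNPP => all_ql; apply: not_ql => v; apply: NNPP => nv; apply: all_ql; exists v.
exists v; split; first exact: deg_sq_le_clique_number.
exact: nbhd_clique_sq_del_v.
Qed.
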